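(* Let $n$ be a positive integer and let $G=G_<$ be an ordered graph on vertex set $S\cup T$, where $S<T$, $|S|\ge \frac{n}{6\log_2 n}$ and $|T|\ge n$. Then either there exists a vertex $v\in S$ such that $|P(v,T)|\ge \frac{n}{12}$, or the complement of $G$ contains a bi-clique of size $\frac{n}{12\log_2 n}$.
   Context: An ordered graph $G_<$ is a graph with a total ordering $<$ of its vertex set. For vertex sets $S,T$, $S<T$ means $s<t$ for all $s\in S$, $t\in T$. For a vertex $v$ and a set $T$ of vertices, a vertex $t\in T$ is reached from $v$ by a monotone $T$-path if there is a sequence $v<t_1<t_2<\dots<t_r=t$ with $r\ge1$, $t_1,\dots,t_r\in T$, and $vt_1,t_1t_2,\dots,t_{r-1}t_r\in E(G)$ ($v$ need not be in $T$). $P(v,T)$ denotes the set of vertices of $T$ that can be reached from $v$ by a monotone $T$-path. A bi-clique is a pair $(A,B)$ of disjoint vertex sets with $|A|=|B|$ and every vertex of $A$ adjacent to every vertex of $B$; its size is $|A|$. (Floors and ceilings are ignored, as in the paper.) *)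

From mathcomp Require Import all_boot.
From Stdlib Require Import Reals.
Set Implicit Arguments.
Unset Strict Implicit.
Unset Printing Implicit Defensive.

(* An ordered graph on N vertices: vertices are 'I_N ordered by the natural
   order; adjacency is a symmetric irreflexive relation E. *)
Definition simple_graph (N : nat) (E : rel 'I_N) : Prop :=
  irreflexive E /\ symmetric E.

Definition set_lt (N : nat) (S T : {set 'I_N}) : Prop :=
  forall s t, s \in S -> t \in T -> (s < t)%N.

Definition mstep (N : nat) (E : rel 'I_N) (T : {set 'I_N}) : rel 'I_N :=
  fun x y => [&& (x < y)%N, E x y & y \in T].

(* P(v,T): vertices of T reachable from v by a monotone T-path with r >= 1
   steps: a first step v -> u, then any number of further steps to t. *)
Definition Preach (N : nat) (E : rel 'I_N) (v : 'I_N) (T : {set 'I_N})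
  : {set 'I_N} :=
  [set t in T | [exists u, mstep E T v u && connect (mstep E T) u t]].

Definition co_biclique (N : nat) (E : rel 'I_N) (A B : {set 'I_N}) (k : nat)
  : Prop :=
  [disjoint A & B] /\ #|A| = k /\ #|B| = k /\
  (forall a b, a \in A -> b \in B -> a != b /\ ~~ E a b).

Definition log2 (x : R) : R := (ln x / ln 2)%R.

(* Suppose every P(v,T) with v in S is small and the complement of G has no
   bi-clique of size k.  Fix k vertices Y of S: a vertex of T not reached from
   Y is a non-neighbour of all of Y, so all but fewer than k vertices of T lie
   in the set W reached from Y.
   Call closure of X in I the set of vertices reached from X by monotone
   I-paths.  If closures in I of r-subsets have at most h vertices, cut I at a
   point c leaving h + k vertices of I above c.  A subset X below c whose
   closure below c has k vertices would form a bi-clique with the vertices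
   above c outside its closure in I, of which there are at least k; so closures
   of r-subsets below c have fewer than k vertices.  Closures are subadditive,
   so each such cut with h = 2k - 2 doubles r at the cost of 3k vertices.
   Singletons of W have closures inside some P(y,T); after log k doublings
   r >= k, which is absurd as a set lies in its own closure.  Counting the
   vertices spent gives |T| < h + 3k (log k + 1) with h = max |P(v,T)|, and
   k = n / (12 log n) makes the right-hand side at most n. *)

From mathcomp Require Import all_boot zify.
From Stdlib Require Import Reals Lra Classical.
(* Reals rebinds [_ ^ _] in nat_scope to Nat.pow; restore ssrnat's expn. *)
From mathcomp Require Import ssrnat.

Set Implicit Arguments.
Unset Strict Implicit.
Unset Printing Implicit Defensive.

Lemma exists_subset_card (T : finType) (A : {set T}) m :
  m <= #|A| -> exists2 B : {set T}, B \subset A & #|B| = m.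
Proof.
rewrite -bin_gt0 -(cards_draws A m) => /card_gt0P[B].
by rewrite inE => /andP[BA /eqP]; exists B.
Qed.

Lemma co_biclique0 N (E : rel 'I_N) : co_biclique E set0 set0 0.
Proof.
by rewrite /co_biclique -setI_eq0 set0I cards0; do 3!split=> //; move=> a b; rewrite inE.
Qed.

Lemma exists_co_biclique_sub N (E : rel 'I_N) (A B : {set 'I_N}) k :
  [disjoint A & B] -> k <= #|A| -> k <= #|B| ->
  (forall a b, a \in A -> b \in B -> ~~ E a b) ->
  exists A' B', co_biclique E A' B' k.
Proof.
move=> dAB /exists_subset_card[A' A'A cardA'] /exists_subset_card[B' B'B cardB'] nE.
have dA'B' : [disjoint A' & B'] by apply: disjointWl A'A (disjointWr B'B dAB).
exists A', B'; do 3!split=> //; move=> a b aA bB; split.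
  by apply: contraTneq dA'B' => ab; apply/pred0Pn; exists a; rewrite /= aA ab.
by apply: nE; [apply: (subsetP A'A) | apply: (subsetP B'B)].
Qed.

Section OrderedGraph.
Variables (N : nat) (E : rel 'I_N).
Implicit Types (A B I J X Y : {set 'I_N}).

Definition mclosure I X : {set 'I_N} :=
  [set y | [exists x in X, connect (mstep E I) x y]].

Lemma connect_mstep_lt I x y :
  connect (mstep E I) x y -> x = y \/ x < y /\ y \in I.
Proof.
move/connectP=> [p]; elim: p x => [|z p IH] x /=; first by move=> _ ->; left.
case/andP=> /and3P[xz _ zI] zp ey; right.
by case: (IH z zp ey) => [<- | [zy ->]] //; rewrite (ltn_trans xz zy).
Qed.

Lemma connect_mstepS I J :
  I \subset J -> subrel (connect (mstep E I)) (connect (mstep E J)).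
Proof.
move=> IJ; apply: connect_sub => x y /and3P[xy Exy yI]; apply: connect1.
by rewrite /mstep xy Exy (subsetP IJ).
Qed.

Lemma mem_mclosure I X y z :
  y \in mclosure I X -> z \in I -> y < z -> E y z -> z \in mclosure I X.
Proof.
rewrite !inE => /exists_inP[x xX xy] zI yz Eyz; apply/exists_inP; exists x => //.
by apply: connect_trans xy (connect1 _); rewrite /mstep yz Eyz.
Qed.

Lemma sub_mclosure I X : X \subset mclosure I X.
Proof. by apply/subsetP=> x xX; rewrite inE; apply/exists_inP; exists x. Qed.

Lemma mclosure_sub I X : X \subset I -> mclosure I X \subset I.
Proof.
move=> XI; apply/subsetP=> y; rewrite inE => /exists_inP[x xX].
by case/connect_mstep_lt=> [<- | [_ ->]] //; apply: (subsetP XI).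
Qed.

Lemma mclosureSl I J X : I \subset J -> mclosure I X \subset mclosure J X.
Proof.
move=> IJ; apply/subsetP=> y; rewrite !inE => /exists_inP[x xX xy].
by apply/exists_inP; exists x => //; apply: connect_mstepS xy.
Qed.

Lemma mclosureSr I X Y : X \subset Y -> mclosure I X \subset mclosure I Y.
Proof.
move=> XY; apply/subsetP=> y; rewrite !inE => /exists_inP[x xX xy].
by apply/exists_inP; exists x => //; apply: (subsetP XY).
Qed.

Lemma mclosureU I X Y :
  mclosure I (X :|: Y) \subset mclosure I X :|: mclosure I Y.
Proof.
apply/subsetP=> y; rewrite !inE => /exists_inP[x]; rewrite inE.
by case/orP=> xXY xy; apply/orP; [left | right]; apply/exists_inP; exists x.
Qed.

Lemma mclosure0 I : mclosure I set0 = set0.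
Proof. by apply/setP=> y; rewrite !inE; apply/exists_inP=> -[x]; rewrite inE. Qed.

Lemma mclosure_Preach v T : mclosure T (Preach E v T) \subset Preach E v T.
Proof.
apply/subsetP=> y; rewrite inE => /exists_inP[x].
rewrite !inE => /andP[xT /existsP[u /andP[vu ux]]] xy.
have -> : y \in T by case: (connect_mstep_lt xy) => [<- | []].
by apply/existsP; exists u; rewrite vu (connect_trans ux xy).
Qed.

Definition below I (c : nat) : {set 'I_N} := [set x in I | x < c].

Lemma below_sub I c : below I c \subset I.
Proof. by apply/subsetP=> x; rewrite inE => /andP[]. Qed.

Lemma card_above I c : #|I :\: below I c| = #|I| - #|below I c|.
Proof. by rewrite cardsD (setIidPr (below_sub I c)). Qed.

Lemma exists_card_below I m : m <= #|I| -> exists c, #|below I c| = m.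
Proof.
have belowS c : #|below I c.+1| <= #|below I c| + 1.
  have sub : below I c.+1 \subset below I c :|: [set x : 'I_N | val x == c].
    apply/subsetP=> x; rewrite !inE ltnS leq_eqVlt.
    by case/andP=> -> /orP[-> | ->]; rewrite ?orbT.
  apply: leq_trans (subset_leq_card sub) _; apply: leq_trans (leq_card_setU _ _) _.
  rewrite leq_add2l; apply/card_le1_eqP=> x y; rewrite !inE => /eqP xc /eqP yc.
  by apply: val_inj; rewrite xc yc.
suff ivt c : m <= #|below I c| -> exists c', #|below I c'| = m.
  suff belowN : below I N = I by rewrite -{1}belowN; apply: ivt.
  by apply/setP=> x; rewrite inE ltn_ord andbT.
elim: c => [|c IH] m_le.
  exists 0; apply/eqP; rewrite eqn_leq m_le andbT.
  rewrite (_ : below I 0 = set0) ?cards0 //.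
  by apply/setP=> x; rewrite !inE ltn0 andbF.
have [/IH // | lt_m] := leqP m #|below I c|.
by exists c.+1; have := belowS c; lia.
Qed.

Definition closure_bound I (r h : nat) : Prop :=
  forall X, X \subset I -> #|X| <= r -> #|mclosure I X| <= h.

Lemma closure_bound_double I r h :
  closure_bound I r h -> closure_bound I (r + r) (h + h).
Proof.
move=> bound X XI card_X.
have [X1 X1X card_X1] := exists_subset_card (geq_minr r #|X|).
have X2X : X :\: X1 \subset X := subsetDl X X1.
have card_X2 : #|X :\: X1| <= r.
  by rewrite cardsD (setIidPr X1X) card_X1; lia.
have XU : X \subset X1 :|: X :\: X1.
  by apply/subsetP=> x xX; rewrite !inE xX andbT orbN.
have cl_sub := subset_trans (mclosureSr I XU) (mclosureU _ _ _).
apply: leq_trans (subset_leq_card cl_sub) (leq_trans (leq_card_setU _ _) _).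
apply: leq_add.
  by apply: bound (subset_trans X1X XI) _; rewrite card_X1 geq_minl.
exact: bound (subset_trans X2X XI) card_X2.
Qed.

Lemma closure_bound_reach (Y T : {set 'I_N}) h :
  (forall y, y \in Y -> #|Preach E y T| <= h) ->
  closure_bound (\bigcup_(y in Y) Preach E y T) 1 h.
Proof.
move=> small X XW card_X; have [-> | [w wX]] := set_0Vmem X.
  by rewrite mclosure0 cards0.
have /bigcupP[y yY wP] := subsetP XW w wX.
have XP : X \subset Preach E y T.
  apply/subsetP=> x xX; move/card_le1P/(_ w wX x): card_X.
  by rewrite xX inE => /esym/eqP ->.
have WT : \bigcup_(y in Y) Preach E y T \subset T.
  by apply/bigcupsP=> z _; apply/subsetP=> t; rewrite inE => /andP[].
apply: leq_trans (small y yY); apply/subset_leq_card.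
apply: subset_trans (mclosureSl _ WT) _.
exact: subset_trans (mclosureSr _ XP) (mclosure_Preach _ _).
Qed.

Section NoCoBiclique.
Variable k : nat.
Hypotheses (k_gt0 : 0 < k) (no_co_biclique : forall A B, ~ co_biclique E A B k).

Lemma nonadjacent_card_lt A B :
  [disjoint A & B] -> k <= #|A| ->
  (forall a b, a \in A -> b \in B -> ~~ E a b) -> #|B| < k.
Proof.
move=> dAB kA nE; rewrite ltnNge; apply/negP=> kB.
by have [A' [B']] := exists_co_biclique_sub dAB kA kB nE; apply: no_co_biclique.
Qed.

Lemma card_above_lt I c X :
  X \subset below I c -> k <= #|mclosure (below I c) X| ->
  #|I :\: below I c| < #|mclosure I X| + k.
Proof.
move=> Xc k_le.
set A := mclosure (below I c) X; set B := (I :\: below I c) :\: mclosure I X.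
have ltA a : a \in A -> a < c.
  by move/(subsetP (mclosure_sub Xc)); rewrite inE => /andP[].
have geB b : b \in B -> [/\ b \notin mclosure I X, b \in I & c <= b].
  rewrite !in_setD => /and3P[bX bc bI]; split=> //.
  by move: bc; rewrite inE bI /= -leqNgt.
have card_B : #|B| < k.
  apply: nonadjacent_card_lt k_le _.
    apply/pred0P=> a /=; apply/andP=> -[/ltA ac /geB[_ _ cb]].
    by move: (leq_trans ac cb); rewrite ltnn.
  move=> a b aA /geB[bX bI cb]; apply: contra bX => Eab.
  have aX : a \in mclosure I X := subsetP (mclosureSl X (below_sub I c)) a aA.
  exact: mem_mclosure aX bI (leq_trans (ltA a aA) cb) Eab.
have sub : I :\: below I c \subset B :|: mclosure I X.
  apply/subsetP=> x xI; rewrite in_setU in_setD xI orbC.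
  by case: (x \in mclosure I X).
have := subset_leq_card sub; have := (leq_card_setU B (mclosure I X)).1; lia.
Qed.

Lemma closure_bound_below I c r h :
  closure_bound I r h -> h + k <= #|I :\: below I c| ->
  closure_bound (below I c) r k.-1.
Proof.
move=> bound h_le X Xc card_X; rewrite -ltnS prednK // ltnNge; apply/negP=> k_le.
have := card_above_lt Xc k_le.
have := bound X (subset_trans Xc (below_sub I c)) card_X; lia.
Qed.

Lemma card_lt_closure_bound s I r :
  closure_bound I r k.-1 -> k <= r * 2 ^ s -> #|I| < k + 3 * k * s.
Proof.
elim: s I r => [|s IH] I r bound k_le; rewrite ltnNge; apply/negP=> I_ge.
  have [X XI card_X] := exists_subset_card (leq_trans (leq_addr _ _) I_ge).
  have := subset_leq_card (sub_mclosure I X).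
  by have := bound X XI; rewrite card_X expn0 muln1 in k_le *; lia.
rewrite mulnS in I_ge.
have [c card_c] := @exists_card_below I (#|I| - 3 * k) (leq_subr _ _).
have bound_c : closure_bound (below I c) (r + r) k.-1.
  apply: closure_bound_below (closure_bound_double bound) _.
  by rewrite card_above card_c; lia.
have k_le2 : k <= (r + r) * 2 ^ s by rewrite mulnDl addnn -mul2n -mulnCA -expnS.
by have := IH _ _ bound_c k_le2; rewrite card_c; lia.
Qed.

Lemma card_unreached_lt Y T :
  set_lt Y T -> k <= #|Y| ->
  #|T| < #|\bigcup_(y in Y) Preach E y T| + k.
Proof.
move=> ltYT k_le; set W := \bigcup_(y in Y) Preach E y T.
have card_TW : #|T :\: W| < k.
  apply: nonadjacent_card_lt k_le _.
    apply/pred0P=> y /=; apply/andP=> -[yY]; rewrite in_setD => /andP[_ yT].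
    by move: (ltYT y y yY yT); rewrite ltnn.
  move=> y t yY; rewrite in_setD => /andP[tW tT]; apply: contra tW => Eyt.
  apply/bigcupP; exists y => //; rewrite inE tT; apply/existsP; exists t.
  by rewrite /mstep (ltYT y t yY tT) Eyt tT connect0.
have := cardsID W T; have := subset_leq_card (subsetIr T W); lia.
Qed.

Lemma card_lt_of_small_reach S T s h :
  set_lt S T -> k <= #|S| -> k <= 2 ^ s ->
  (forall v, v \in S -> #|Preach E v T| <= h) ->
  #|T| + 1 < h + 3 * k * s.+1.
Proof.
move=> ltST k_le k_le_exp small; rewrite mulnS.
have [Y YS card_Y] := exists_subset_card k_le.
have ltYT : set_lt Y T by move=> y t /(subsetP YS); apply: ltST.
set W := \bigcup_(y in Y) Preach E y T.
have card_W : #|T| < #|W| + k := card_unreached_lt ltYT (eq_leq (esym card_Y)).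
have [c card_c] := @exists_card_below W (#|W| - (h + k)) (leq_subr _ _).
have small_W : closure_bound W 1 h.
  by apply: closure_bound_reach => y /(subsetP YS); apply: small.
have card_above_c := card_above W c; rewrite card_c in card_above_c.
have [|hk_le] := ltnP #|W| (h + k); first by lia.
have k_le_exp1 : k <= 1 * 2 ^ s by rewrite mul1n.
have bound_c : closure_bound (below W c) 1 k.-1.
  by apply: closure_bound_below small_W _; rewrite card_above_c; lia.
by have := card_lt_closure_bound bound_c k_le_exp1; rewrite card_c; lia.
Qed.

End NoCoBiclique.
End OrderedGraph.

Lemma exists_co_biclique N (E : rel 'I_N) (S T : {set 'I_N}) k s h :
  set_lt S T -> 0 < k -> k <= #|S| -> k <= 2 ^ s ->
  (forall v, v \in S -> #|Preach E v T| <= h) ->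
  h + 3 * k * s.+1 <= #|T| + 1 ->
  exists A B, co_biclique E A B k.
Proof.
move=> ltST k_gt0 k_le k_le_exp small budget; apply: NNPP=> no_co_biclique.
have none A B : ~ co_biclique E A B k by move=> AB; apply: no_co_biclique; exists A, B.
by have := card_lt_of_small_reach k_gt0 none ltST k_le k_le_exp small; lia.
Qed.

Lemma parameter_budget n m q :
  2 ^ m <= n < 2 ^ m.+1 -> 0 < m -> q * (12 * m) < n ->
  n.-1 %/ 12 + 3 * q.+1 * (up_log 2 q.+1).+1 <= n + 1.
Proof.
case/andP=> n_ge n_lt m_gt0 q_lt.
have n_gt1 : 1 < n by apply: leq_trans n_ge; rewrite -{1}(expn1 2) leq_pexp2l.
have h_le := leq_divM n.-1 12.
have [-> | q_gt0] := posnP q; first by rewrite up_log1; lia.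
have m_gt4 : 4 < m.
  have small_exp j : 0 < j <= 4 -> 2 ^ j.+1 <= 12 * j.
    by case: j => [|[|[|[|[|]]]]].
  rewrite ltnNge; apply/negP=> m_le4.
  have := small_exp m; rewrite m_gt0 m_le4 => /(_ isT); nia.
have s_le : up_log 2 q.+1 <= m.+1.
  by apply: up_log_min => //; apply: ltnW; nia.
nia.
Qed.

Lemma ln_le x y : (0 < x -> x <= y -> ln x <= ln y)%R.
Proof.
move=> x_gt0 /Rle_lt_or_eq_dec[xy | ->]; last exact: Rle_refl.
exact/Rlt_le/ln_increasing.
Qed.

Lemma INR_expn m n : INR (m ^ n) = (INR m ^ n)%R.
Proof. by elim: n => [|n IH] //; rewrite expnS -multE mult_INR IH. Qed.

Lemma log2_trunc_log n : 0 < n ->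
  (INR (trunc_log 2 n) <= log2 (INR n) <= INR (trunc_log 2 n) + 1)%R.
Proof.
move=> n_gt0; set m := trunc_log 2 n.
have ln2_gt0 : (0 < ln 2)%R by have := ln_lt_2; lra.
have ln_exp2 j : ln (INR (2 ^ j)) = (INR j * ln 2)%R.
  by rewrite INR_expn (_ : INR 2 = 2%R) ?ln_pow //; lra.
have lo : (INR m * ln 2 <= ln (INR n))%R.
  rewrite -ln_exp2; apply: ln_le; last exact/le_INR/leP/trunc_logP.
  by apply/lt_0_INR/ltP; rewrite expn_gt0.
have hi : (ln (INR n) <= (INR m + 1) * ln 2)%R.
  rewrite -S_INR -ln_exp2; apply/ln_le; first exact/lt_0_INR/ltP.
  exact/le_INR/leP/ltnW/trunc_log_ltn.
by rewrite /log2; split; apply: (Rmult_le_reg_r (ln 2)) => //;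
  rewrite /Rdiv Rmult_assoc Rinv_l; lra.
Qed.

Lemma Rdiv_le_iff x y c : (0 < c -> x / c <= y <-> x <= y * c)%R.
Proof.
move=> c_gt0; have xc : (x / c * c = x)%R by field; lra.
split=> h; first by rewrite -xc; apply: Rmult_le_compat_r; lra.
by apply: (Rmult_le_reg_r c) => //; rewrite xc.
Qed.

Lemma INR_12 : INR 12 = 12%R.
Proof. by rewrite /=; lra. Qed.

Lemma leq_mul_of_INR_ge_div a n m (L : R) :
  0 < m -> (0 < L <= INR m + 1)%R ->
  (INR a >= INR n / (6 * L))%R -> n <= a * (12 * m).
Proof.
move=> m_gt0 L_bounds /Rge_le/Rdiv_le_iff a_ge; apply/leP/INR_le.
have m_ge1 : (1 <= INR m)%R by apply: (le_INR 1); apply/leP.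
have := a_ge ltac:(lra); rewrite -!multE !mult_INR INR_12.
have := pos_INR a; nra.
Qed.

Lemma INR_ge_div_of_leq_mul k n m (L : R) :
  (0 < L)%R -> (INR m <= L)%R -> n <= k * (12 * m) ->
  (INR k >= INR n / (12 * L))%R.
Proof.
move=> L_gt0 L_ge /leP/le_INR; rewrite -!multE !mult_INR INR_12 => n_le.
apply/Rle_ge/Rdiv_le_iff; first lra.
have := pos_INR k; nra.
Qed.

Lemma leq_div_of_not_INR_ge_div p n :
  ~ (INR p >= INR n / 12)%R -> p <= n.-1 %/ 12.
Proof.
move=> /Rnot_ge_lt p_lt; rewrite leq_divRL //.
suff : p * 12 < n by lia.
by apply/ltP/INR_lt; rewrite -multE mult_INR INR_12; lra.
Qed.

Theorem lemma6 (n N : nat) (E : rel 'I_N) (S T : {set 'I_N}) :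
  (0 < n)%N ->
  simple_graph E ->
  S :|: T = [set: 'I_N] ->
  set_lt S T ->
  (INR #|S| >= INR n / (6 * log2 (INR n)))%R ->
  (#|T| >= n)%N ->
  (exists v, v \in S /\ (INR #|Preach E v T| >= INR n / 12)%R) \/
  (exists (A B : {set 'I_N}) (k : nat),
      co_biclique E A B k /\ (INR k >= INR n / (12 * log2 (INR n)))%R).
Proof.
move=> n_gt0 _ _ ltST card_S card_T.
have [n_gt1 | n_le1] := ltnP 1 n; last first.
  (* log2 1 = 0 and x / 0 = 0 in Rocq, so the empty bi-clique suffices. *)
  right; exists set0, set0, 0; split; first exact: co_biclique0.
  have -> : n = 1 by lia.
  by rewrite /log2 /= ln_1 Rdiv_0_l Rmult_0_r Rdiv_0_r; lra.
have [log_ge log_le] := log2_trunc_log n_gt0.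
set m := trunc_log 2 n in log_ge log_le *.
have m_gt0 : 0 < m by rewrite trunc_log_gt0.
have L_gt0 : (0 < log2 (INR n))%R.
  by have := le_INR 1 m (elimT leP m_gt0); rewrite /=; lra.
have d_gt0 : 0 < 12 * m by rewrite muln_gt0.
set q := n.-1 %/ (12 * m).
have q_lt : q * (12 * m) < n by have := leq_divM n.-1 (12 * m); lia.
have n_le : n <= q.+1 * (12 * m) by have := ltn_ceil n.-1 d_gt0; lia.
case: (classic (exists v, v \in S /\ (INR #|Preach E v T| >= INR n / 12)%R)).
  by left.
move=> no_large; have k_le : q.+1 <= #|S|.
  rewrite -(ltn_pmul2r d_gt0); apply: leq_trans q_lt _.
  exact: leq_mul_of_INR_ge_div m_gt0 (conj L_gt0 log_le) card_S.
have small v : v \in S -> #|Preach E v T| <= n.-1 %/ 12.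
  by move=> vS; apply: leq_div_of_not_INR_ge_div => large; apply: no_large; exists v.
have budget := parameter_budget (trunc_log_bounds (ltnSn 1) n_gt0) m_gt0 q_lt.
have [A [B AB]] := exists_co_biclique ltST (ltn0Sn q) k_le (up_logP _ (ltnSn 1))
  small (leq_trans budget (leq_add card_T (leqnn 1))).
right; exists A, B, q.+1; split=> //.
exact: INR_ge_div_of_leq_mul L_gt0 log_ge n_le.
Qed.
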